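(* Let $\alpha_1,\dots,\alpha_n\in\mathbb{Z}^{n-1}$ be weights of a representation of $T^{n-1}$ on $\mathbb{C}^n$ in general position (every $n-1$ of them linearly independent). For $i=1,\dots,n$ let $\tilde c_i=(-1)^i\det(\alpha_1,\dots,\widehat{\alpha_i},\dots,\alpha_n)\in\mathbb{Z}$ (nonzero), $c_{\gcd}=\gcd(\tilde c_1,\dots,\tilde c_n)$ and $c_i=\tilde c_i/c_{\gcd}$. Let $G=T^n$ act on $\mathbb{C}^n$ by $(t_1,\dots,t_n)\cdot(z_1,\dots,z_n)=(t_1z_1,\dots,t_nz_n)$ and let $T'=\{t\in G\mid t_1^{c_1}\cdots t_n^{c_n}=1\}$ act by restriction. Then this action of $T'$ on $\mathbb{C}^n$ is strictly appropriate (all its stabilizer subgroups are connected) if and only if $c_i=\pm1$ for all $i$, i.e. if and only if all $\tilde c_i$ coincide up to sign.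
   Context: The orbit space of the original representation coincides with that of $T'$ acting on $\mathbb{C}^n$. For this linear action the fixed point set is the origin and the adjoining condition holds, so ''strictly appropriate'' amounts to the requirement that every stabilizer subgroup of $T'$ be a torus (have no finite components). *)

From HB Require Import structures.
From mathcomp Require Import all_boot all_order all_algebra.
From mathcomp Require Import all_classical all_reals all_analysis.
From mathcomp.real_closed Require Import complex.
Set Implicit Arguments. Unset Strict Implicit. Unset Printing Implicit Defensive.
Import Order.TTheory GRing.Theory Num.Theory.
Import numFieldNormedType.Exports.
Local Open Scope ring_scope.
Local Open Scope classical_set_scope.

(* n = m.+1 ; the weights alpha_1..alpha_n in Z^(n-1) are the rows of
   A : 'M[int]_(m.+1, m).  Ordinals are 0-based, so the paper's index i
   corresponds to the ordinal i-1, hence the sign (-1)^(i.+1). *)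
Definition ctilde (m : nat) (A : 'M[int]_(m.+1, m)) (i : 'I_m.+1) : int :=
  (-1) ^+ i.+1 * \det (row' i A).

Definition cgcd (m : nat) (A : 'M[int]_(m.+1, m)) : int :=
  Posz (\big[gcdn/0%N]_(i < m.+1) `|ctilde A i|%N).

Definition cvec (m : nat) (A : 'M[int]_(m.+1, m)) (i : 'I_m.+1) : int :=
  (ctilde A i %/ cgcd A)%Z.

Definition torus (R : realType) (n : nat) : set 'rV[R[i]^o]_n :=
  [set t | forall j, `|t ord0 j| = 1].

Definition Tprime (R : realType) (m : nat) (A : 'M[int]_(m.+1, m))
  : set 'rV[R[i]^o]_m.+1 :=
  [set t | torus t /\ \prod_(j < m.+1) (t ord0 j) ^ (cvec A j) = 1].

Definition stabilizer (R : realType) (m : nat) (A : 'M[int]_(m.+1, m))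
  (z : 'rV[R[i]^o]_m.+1) : set 'rV[R[i]^o]_m.+1 :=
  [set t | Tprime A t /\ forall j, t ord0 j * z ord0 j = z ord0 j].

Definition strictly_appropriate (R : realType) (m : nat)
  (A : 'M[int]_(m.+1, m)) : Prop :=
  forall z : 'rV[R[i]^o]_m.+1, connected (stabilizer A z).

(* If every c_i is 1 or -1, the stabilizer of z is the set of t in T' with
   t_j = 1 whenever z_j <> 0.  If no z_k vanishes this is {1}; otherwise pick
   z_k = 0 and join any such t to 1 inside the stabilizer by the path
   s |-> (e^(i s theta_j))_j, where theta_j is an argument of t_j for j <> k and
   theta_k = -c_k sum_(j <> k) c_j theta_j, so that sum_j c_j theta_j = 0
   because c_k^2 = 1.
   Conversely, if k = |c_i| >= 2, the stabilizer of the point with z_i = 0 and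
   z_j = 1 otherwise consists of the t with t_j = 1 for j <> i and t_i^k = 1.
   The geometric sum 1 + x + ... + x^(k-1) is k at x = 1 and 0 at the other
   k-th roots of unity, one of which exists, so this sum evaluated at t_i
   disconnects the stabilizer.
   The second equivalence is arithmetic: all c_i are 1 or -1 iff all |ctilde_i|
   equal c_gcd. *)

From HB Require Import structures.
From mathcomp Require Import all_boot all_order all_algebra.
From mathcomp Require Import all_classical all_reals all_analysis.
From mathcomp.real_closed Require Import complex.
From mathcomp Require Import lra.
Set Implicit Arguments.
Unset Strict Implicit.
Unset Printing Implicit Defensive.
Import Order.TTheory GRing.Theory Num.Theory.
Import numFieldNormedType.Exports.
Local Open Scope ring_scope.

Lemma expfz_eq1 (F : unitRingType) (x : F) (c : int) :
  (x ^ c == 1) = (x ^+ `|c|%N == 1).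
Proof. by case: c => n; rewrite ?NegzE -?invr_expz ?invr_eq1 -exprnP. Qed.

Definition geom_poly (F : nzRingType) (k : nat) : {poly F} := \poly_(l < k) 1.

Section GeometricPoly.
Variables (F : idomainType) (k : nat).

Lemma subr1_mul_horner_geom (x : F) :
  (x - 1) * (geom_poly F k).[x] = x ^+ k - 1.
Proof.
rewrite subrX1 horner_poly; congr (_ * _).
by apply: eq_bigr => l _; rewrite mul1r.
Qed.

Lemma horner_geom1 : (geom_poly F k).[1] = k%:R.
Proof.
rewrite horner_poly (eq_bigr (fun=> 1)) => [|l _]; last by rewrite expr1n mulr1.
by rewrite sumr_const card_ord.
Qed.

Lemma horner_geom_root_unity (x : F) :
  x ^+ k = 1 -> x != 1 -> (geom_poly F k).[x] = 0.
Proof.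
move=> xk1 x_neq1; have := subr1_mul_horner_geom x.
by rewrite xk1 subrr => /eqP; rewrite mulf_eq0 subr_eq0 (negbTE x_neq1) => /eqP.
Qed.

End GeometricPoly.

Lemma root_geom_exists (C : closedFieldType) k : (1 < k)%N ->
  exists w : C, (geom_poly C k).[w] = 0 /\ w ^+ k = 1.
Proof.
move=> k_gt1; have [w /rootP qw0] : exists w : C, root (geom_poly C k) w.
  by apply/closed_rootP; rewrite size_poly_eq ?oner_neq0 // neq_ltn k_gt1 orbT.
exists w; split => //; apply/eqP.
by rewrite -subr_eq0 -subr1_mul_horner_geom qw0 mulr0.
Qed.

Section ContinuityConnectedness.
Local Open Scope classical_set_scope.

Lemma row_continuous (T : topologicalType) (K : numFieldType) n
    (f : T -> 'I_n -> K) :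
  (forall j, continuous (f ^~ j)) ->
  continuous (fun x => \row_j f x j : 'rV[K]_n).
Proof.
move=> fc x; apply/cvg_ballP => e e0.
have : \forall y \near x, forall j, ball (f x j) e (f y j).
  by apply: filter_forall => j; move/cvg_ballP: (fc j x); apply.
by apply: filterS => y fxy; split => // i j; rewrite !mxE.
Qed.

Lemma horner_continuous (K : numFieldType) (p : {poly K}) :
  continuous (horner p).
Proof.
elim/poly_ind: p => [|p c IH] x.
  have -> : horner (0 : {poly K}) = cst 0 by apply/funext => y; rewrite horner0.
  exact: cst_continuous.
have -> : horner (p * 'X + c%:P) = horner p \* id + cst c.
  by apply/funext => y; rewrite hornerMXaddC.
apply: continuousD; last exact: cst_continuous.
by apply: continuousM; [exact: IH | exact: cvg_id].
Qed.

Lemma connected_subset_set2 (T : topologicalType) (X : set T) (a b : T) :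
  hausdorff_space T -> connected X -> X `<=` [set a; b] -> X a -> X b ->
  a = b.
Proof.
move=> /hausdorff_accessible/accessible_closed_set1 T1 cX Xab Xa Xb.
have [//|neq_ab] := eqVneq a b.
have ab0 : [set a] `&` [set b] = set0.
  by apply/seteqP; split => // x [-> /eqP]; rewrite (negbTE neq_ab).
have sep : separated [set a] [set b].
  by rewrite /separated -!(closure_id _).1 ?T1 // ab0.
by case: (connected_subset sep Xab cX) => [/(_ b Xb)|/(_ a Xa)].
Qed.

End ContinuityConnectedness.

Section UnitCircle.
Context {R : realType}.
Local Open Scope complex_scope.

Lemma normc_real (r : R) : `|(r%:C : R[i])| = `|r|%:C.
Proof. by rewrite normc_def /= expr0n /= addr0 sqrtr_sqr. Qed.

Lemma real_complex_continuous : continuous (fun r : R => (r%:C : R[i]^o)).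
Proof.
move=> x; apply/cvg_ballP => -[e b]; rewrite ltcE /= => /andP[/eqP-> e0].
exists e => // y xy.
by rewrite /ball /= -rmorphB normc_real ltcR.
Qed.

Definition expi (x : R) : R[i]^o := cos x +i* sin x.

Lemma expi_continuous : continuous expi.
Proof.
have -> : expi = (fun x => (cos x)%:C + 'i * (sin x)%:C).
  apply/funext => x; apply/eqP.
  by rewrite eq_complex /= !(mul0r, mul1r, subr0, add0r, addr0) !eqxx.
move=> x; apply: cvgD.
  exact: continuous_comp (@continuous_cos R x)
    (@real_complex_continuous (cos x)).
apply: cvgM; first exact: cvg_cst.
exact: continuous_comp (@continuous_sin R x) (@real_complex_continuous (sin x)).
Qed.

Lemma expi0 : expi 0 = 1.
Proof. by apply/eqP; rewrite eq_complex /= cos0 sin0 !eqxx. Qed.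

Lemma expiD x y : expi (x + y) = expi x * expi y.
Proof.
by apply/eqP; rewrite eq_complex /= cosD sinD eqxx [_ + sin x * _]addrC eqxx.
Qed.

Lemma norm_expi x : `|expi x| = 1.
Proof. by rewrite normc_def /= cos2Dsin2 sqrtr1. Qed.

Lemma expi_neq0 x : expi x != 0.
Proof. by rewrite -normr_eq0 norm_expi oner_neq0. Qed.

Lemma expiN x : expi (- x) = (expi x)^-1.
Proof.
by apply: (mulfI (expi_neq0 x)); rewrite -expiD subrr expi0 divff ?expi_neq0.
Qed.

Lemma expiMn x k : expi x ^+ k = expi (x *+ k).
Proof. by elim: k => [|k IH]; rewrite ?expi0 // exprS IH mulrS expiD. Qed.

Lemma expiz x (c : int) : expi x ^ c = expi (c%:~R * x).
Proof.
case: c => k; first by rewrite -exprnP expiMn mulrC mulr_natr.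
by rewrite NegzE -invr_expz -exprnP expiMn -expiN mulrNz mulNr mulrC mulr_natr.
Qed.

Lemma prod_expi (I : Type) (r : seq I) (P : pred I) (f : I -> R) :
  \prod_(j <- r | P j) expi (f j) = expi (\sum_(j <- r | P j) f j).
Proof. by elim/big_rec2: _ => [|j y1 y2 _ ->]; rewrite ?expi0 ?expiD. Qed.

(* A right inverse of [expi] on the unit circle.  Its discontinuity is
   harmless: it only supplies the constant angles of the paths below. *)
Definition carg (t : R[i]) : R :=
  let: a +i* b := t in if 0 <= b then acos a else - acos a.

Lemma carg1 : carg 1 = 0.
Proof. by rewrite /carg /= lexx acos1. Qed.

Lemma expi_carg t : `|t| = 1 -> expi (carg t) = t.
Proof.
case: t => a b; rewrite normc_def /= => -[/(congr1 (fun x => x ^+ 2))].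
rewrite expr1n sqr_sqrtr ?addr_ge0 ?sqr_ge0 // => ab1.
have a_bound : -1 <= a <= 1 by apply/andP; split; nra.
have sinE : Num.sqrt (1 - a ^+ 2) = `|b| by rewrite -ab1 addrC addKr sqrtr_sqr.
rewrite /carg; apply/eqP; rewrite eq_complex /=; case: ifPn => b0.
  by rewrite acosK ?inE // sin_acos // sinE ger0_norm // !eqxx.
rewrite cosN sinN acosK ?inE // sin_acos // sinE ltr0_norm ?opprK ?eqxx //.
by rewrite ltNge.
Qed.

End UnitCircle.

Section Weights.
Variables (m : nat) (A : 'M[int]_(m.+1, m)).
Hypothesis A_general : forall i : 'I_m.+1,
  row_free (map_mx (intr : int -> rat) (row' i A)).

Lemma ctilde_neq0 i : ctilde A i != 0.
Proof.
rewrite mulf_eq0 signr_eq0 /= -(intr_eq0 rat) -det_map_mx -unitfE -unitmxE.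
by rewrite -row_free_unit A_general.
Qed.

Lemma cgcd_dvd i : (cgcd A %| ctilde A i)%Z.
Proof. exact: biggcdn_inf. Qed.

Lemma cgcd_neq0 : cgcd A != 0.
Proof.
apply: contraNneq (ctilde_neq0 ord0) => g0.
by have := cgcd_dvd ord0; rewrite g0 dvd0z.
Qed.

Lemma ctildeE i : ctilde A i = cvec A i * cgcd A.
Proof. by rewrite divzK ?cgcd_dvd. Qed.

Lemma cvec_neq0 i : cvec A i != 0.
Proof.
by apply: contraNneq (ctilde_neq0 i) => c0; rewrite ctildeE c0 mul0r.
Qed.

Lemma cvec_pm1_iff_norm_ctilde_const :
  (forall i, cvec A i = 1 \/ cvec A i = -1) <->
  (forall i j, `|ctilde A i| = `|ctilde A j|).
Proof.
split=> [c_pm1 i j | ct_const i].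
  by rewrite !ctildeE !normrM; case: (c_pm1 i) => ->; case: (c_pm1 j) => ->.
have gE : cgcd A = `|ctilde A ord0|.
  rewrite -abszE; apply/eqP; rewrite eqz_nat eqn_dvd (biggcdn_inf ord0) //=.
  apply/dvdn_biggcdP => j _.
  by have := ct_const ord0 j; rewrite -!abszE => -[->].
have : `|cvec A i| * cgcd A = 1 * cgcd A.
  by rewrite mul1r {2}gE -(ct_const i ord0) ctildeE normrM [`|cgcd A|]ger0_norm.
move/(mulIf cgcd_neq0)/eqP; rewrite eqr_norml ler01 andbT.
by case/orP => /eqP; [left | right].
Qed.

End Weights.

Section Stabilizers.
Variables (R : realType) (m : nat) (A : 'M[int]_(m.+1, m)).
Local Open Scope classical_set_scope.
Local Notation C := R[i]^o.
Local Notation c := (cvec A).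
Local Notation one := (const_mx 1 : 'rV[C]_m.+1).

Lemma stabilizer_one z : stabilizer A z one.
Proof.
split; [split|] => [j|| j]; rewrite ?mxE ?normr1 ?mul1r //.
by rewrite big1 // => j _; rewrite mxE exp1rz.
Qed.

Lemma stabilizer_fixed (z t : 'rV[C]_m.+1) j :
  stabilizer A z t -> z ord0 j != 0 -> t ord0 j = 1.
Proof. by move=> [_ fix_t] zj; apply: (mulIf zj); rewrite mul1r fix_t. Qed.

Section TorusPath.
Variables (k : 'I_m.+1) (t : 'rV[C]_m.+1).

Let rest_angle := \sum_(j | j != k) (c j)%:~R * carg (t ord0 j).

Let angle j : R :=
  if j == k then - (c k)%:~R * rest_angle else carg (t ord0 j).

Definition torus_path (s : R) : 'rV[C]_m.+1 := \row_j expi (s * angle j).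

Lemma torus_path_continuous : continuous torus_path.
Proof.
apply: row_continuous => j s.
have lin : {for s, continuous (fun y : R => y * angle j)}.
  by apply: continuousM; [exact: cvg_id | exact: cst_continuous].
exact: continuous_comp lin (@expi_continuous _ _).
Qed.

Lemma torus_path0 : torus_path 0 = one.
Proof. by apply/matrixP => ? j; rewrite !mxE mul0r expi0. Qed.

Hypothesis ck2 : c k ^+ 2 = 1.

Lemma weighted_angle_sum : \sum_j (c j)%:~R * angle j = 0.
Proof.
rewrite (bigD1 k) //= {1}/angle eqxx.
rewrite (eq_bigr (fun j => (c j)%:~R * carg (t ord0 j))) => [|j /negbTE jk].
  by rewrite -/rest_angle mulrA mulrN -expr2 -rmorphXn /= ck2 mulN1r addNr.
by rewrite /angle jk.
Qed.

Lemma torus_path1 : Tprime A t -> torus_path 1 = t.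
Proof.
move=> [tor tc]; apply/matrixP => i j; rewrite ord1 !mxE mul1r /angle.
have [->|jk] := eqVneq j k; last by rewrite expi_carg.
have rest : \prod_(j | j != k) t ord0 j ^ c j = expi rest_angle.
  rewrite -prod_expi; apply: eq_bigr => l _.
  by rewrite -{1}(expi_carg (tor l)) expiz.
move: tc; rewrite (bigD1 k) //= rest => /(canRL (mulfK (expi_neq0 _))).
rewrite mul1r -expiN => tk.
by rewrite mulNr -mulrN -expiz -tk exprz_exp -expr2 ck2 expr1z.
Qed.

Lemma torus_path_stabilizer (z : 'rV[C]_m.+1) (s : R) :
  z ord0 k = 0 -> stabilizer A z t -> stabilizer A z (torus_path s).
Proof.
move=> zk0 St; split; [split|] => [j||j]; rewrite ?mxE ?norm_expi //.
  under eq_bigr do rewrite mxE expiz mulrCA.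
  by rewrite prod_expi -mulr_sumr weighted_angle_sum mulr0 expi0.
have [zj0|zj] := eqVneq (z ord0 j) 0; first by rewrite zj0 mulr0.
have jk : j != k by apply: contraNneq zj => ->; rewrite zk0.
by rewrite /angle (negbTE jk) (stabilizer_fixed St zj) carg1 mulr0 expi0 mul1r.
Qed.

End TorusPath.

Lemma stabilizer_connected (z : 'rV[C]_m.+1) :
  (forall j, c j = 1 \/ c j = -1) -> connected (stabilizer A z).
Proof.
move=> c_pm1.
have [k /eqP zk0|z_neq0] := pickP (fun j => z ord0 j == 0); last first.
  suff -> : stabilizer A z = [set one] by exact: connected1.
  apply/seteqP; split => [t St | _ ->]; last exact: stabilizer_one.
  by apply/matrixP => i j; rewrite ord1 mxE (stabilizer_fixed St) ?z_neq0.
have ck2 : c k ^+ 2 = 1 by case: (c_pm1 k) => ->.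
suff S_comp : stabilizer A z `<=` connected_component (stabilizer A z) one.
  rewrite (_ : stabilizer A z = connected_component (stabilizer A z) one).
    exact: component_connected.
  by apply/seteqP; split => //; exact: connected_component_sub.
move=> t St; set path := torus_path k t @` `[0, 1].
have path0 : path one.
  by exists 0; rewrite ?torus_path0 //= in_itv /= lexx ler01.
have path1 : path t.
  by exists 1; [rewrite /= in_itv /= lexx ler01 | apply: torus_path1; case: St].
have pathS : path `<=` stabilizer A z.
  by move=> _ [s _ <-]; exact: torus_path_stabilizer.
apply: (connected_component_max path0 pathS) path1.
apply: connected_continuous_connected; first exact: segment_connected.
exact/continuous_subspaceT/torus_path_continuous.
Qed.

Definition hyperplane_point i : 'rV[C]_m.+1 := \row_j (j != i)%:R.

Lemma stabilizer_hyperplane_point i t :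
  stabilizer A (hyperplane_point i) t -> t ord0 i ^+ `|c i| = 1.
Proof.
move=> St; case: (St) => -[_]; rewrite (bigD1 i) //= big1 ?mulr1 => [tc _|j ji].
  by apply/eqP; rewrite -expfz_eq1 tc.
by rewrite (stabilizer_fixed St) ?exp1rz // mxE ji oner_neq0.
Qed.

Lemma stabilizer_hyperplane_pointP i (w : C) : `|w| = 1 -> w ^+ `|c i| = 1 ->
  stabilizer A (hyperplane_point i) (\row_j (if j == i then w else 1)).
Proof.
move=> w_norm wc; split; [split|] => [j||j]; rewrite ?mxE.
- by case: ifP; rewrite ?normr1.
- rewrite (bigD1 i) //= big1 => [|j ji]; last by rewrite mxE (negbTE ji) exp1rz.
  by rewrite mulr1 mxE eqxx; apply/eqP; rewrite expfz_eq1 wc.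
- by case: eqVneq => _; rewrite ?mulr0 ?mul1r.
Qed.

Lemma stabilizer_not_connected i : (1 < `|c i|)%N ->
  ~ connected (stabilizer A (hyperplane_point i)).
Proof.
set k := `|c i|%N => k_gt1 S_conn.
have [w [qw0 wk]] := root_geom_exists C k_gt1.
have w_norm : `|w| = 1.
  by apply/eqP; rewrite -(pexpr_eq1 (ltnW k_gt1)) // -normrX wk normr1.
pose psi (t : 'rV[C]_m.+1) : C := (geom_poly C k).[t ord0 i].
have psi_cont : continuous psi.
  move=> t; apply: continuous_comp (@horner_continuous _ _ (t ord0 i)).
  exact: (@coord_continuous _ _ _ ord0 i t).
have : (k%:R : C) = 0.
  apply: (connected_subset_set2 _ (connected_continuous_connected S_conn
    (continuous_subspaceT psi_cont))); first exact: norm_hausdorff.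
  - move=> _ [t St <-]; have [t1|t_neq1] := eqVneq (t ord0 i) 1.
      by left; rewrite /psi t1 horner_geom1.
    by right; apply: horner_geom_root_unity t_neq1; exact: stabilizer_hyperplane_point.
  - by exists one; [exact: stabilizer_one | rewrite /psi mxE horner_geom1].
  - exists (\row_j (if j == i then w else 1)).
      exact: stabilizer_hyperplane_pointP.
    by rewrite /psi mxE eqxx.
by apply/eqP; rewrite pnatr_eq0 -lt0n ltnW.
Qed.

End Stabilizers.

Theorem lemma4p3 (R : realType) (m : nat) (A : 'M[int]_(m.+1, m))
  (Hgen : forall i : 'I_m.+1,
      row_free (map_mx (intr : int -> rat) (row' i A))) :
  (strictly_appropriate R A <-> forall i, cvec A i = 1 \/ cvec A i = -1) /\
  (strictly_appropriate R A <-> forall i j, `|ctilde A i| = `|ctilde A j|).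
Proof.
have sa_iff :
    strictly_appropriate R A <-> forall i, cvec A i = 1 \/ cvec A i = -1.
  split=> [SA i | c_pm1 z]; last exact: stabilizer_connected.
  have [c_gt1|] := ltnP 1 `|cvec A i|%N.
    by case: (stabilizer_not_connected c_gt1 (SA _)).
  move: (cvec_neq0 Hgen i).
  by case: (cvec A i) => [[|[|n]]|[|n]] //= _ _; [left | right].
by split; rewrite // sa_iff cvec_pm1_iff_norm_ctilde_const.
Qed.
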